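(* Let $\mathbb{X},\mathbb{Y}$ be Euclidean spaces, $\mathbb{Z}=\mathbb{X}\times\mathbb{Y}$ equipped with a norm $\|\cdot\|$ with dual norm $\|\cdot\|_*$, and $\mathcal{X}\subseteq\mathbb{X}$, $\mathcal{Y}\subseteq\mathbb{Y}$ closed convex sets, $\mathcal{Z}=\mathcal{X}\times\mathcal{Y}$. Let $\phi:\mathcal{Z}\to\mathbb{R}$ be convex-concave (convex in $x$, concave in $y$) and differentiable, with $F(z)=(\partial_x\phi(z),-\partial_y\phi(z))$ satisfying $\sup_{z\in\mathcal{Z}}\|F(z)\|_*<\infty$ and $\|F(z)-F(z')\|_*\le L\|z-z'\|$ for all $z,z'\in\mathcal{Z}$. Let $\psi_{\mathbb{Z}}$ be smooth and $1$-strongly convex w.r.t. $\|\cdot\|$, with Bregman divergence $D_{\mathbb{Z}}(w,z)=\psi_{\mathbb{Z}}(w)-\psi_{\mathbb{Z}}(z)-\langle\nabla\psi_{\mathbb{Z}}(z),w-z\rangle$, and let $\Omega=\sup_{z,z'\in\mathcal{Z}}D_{\mathbb{Z}}(z,z')$. For $\xi,z\in\mathbb{Z}$ let $\mathrm{Prox}^{\mathcal{Z}}_{\langle\xi,\cdot\rangle}(z)=\arg\min_{w\in\mathcal{Z}}\{\langle\xi,w\rangle+D_{\mathbb{Z}}(w,z)\}$. Let $z^0\in\mathcal{Z}$, stepsizes $\tau_t>0$, and let Mirror Prox generate, for $t=0,1,2,\dots$, $\tilde z^t=\mathrm{Prox}^{\mathcal{Z}}_{\langle\tau_tF(z^t),\cdot\rangle}(z^t)$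 and $z^{t+1}=\mathrm{Prox}^{\mathcal{Z}}_{\langle\tau_tF(\tilde z^t),\cdot\rangle}(z^t)$. Let $\delta_t=\tau_t\langle F(\tilde z^t),\tilde z^t-z^{t+1}\rangle-D_{\mathbb{Z}}(z^{t+1},z^t)$. Let $w_t\ge0$ be nondecreasing, $S_T=\sum_{t=1}^Tw_t\tau_t$ (assumed positive), and $\bar z^T=(\bar x^T,\bar y^T)=\frac1{S_T}\sum_{t=1}^Tw_t\tau_t\tilde z^t$. Then for every $T\ge1$ and every $(x,y)\in\mathcal{X}\times\mathcal{Y}$, $$\phi(\bar x^T,y)-\phi(x,\bar y^T)\le\frac{w_T\Omega+\sum_{t=1}^Tw_t\delta_t}{S_T}.$$ In particular, if $\tau_t=\frac1L$ for all $t$ and $w_t=t^q$ with $q\ge0$, then $\delta_t\le0$ for all $t$ and $$\phi(\bar x^T,y)-\phi(x,\bar y^T)\le\frac{(q+1)L\Omega}{T}.$$ *)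

From HB Require Import structures.
From mathcomp Require Import all_boot all_order all_algebra.
From mathcomp Require Import all_classical all_reals all_analysis.
Set Implicit Arguments. Unset Strict Implicit. Unset Printing Implicit Defensive.
Import Order.TTheory GRing.Theory Num.Theory.
Import numFieldNormedType.Exports.
Local Open Scope classical_set_scope.
Local Open Scope ring_scope.

Definition dotv (R : realType) (k : nat) (u v : 'rV[R]_k) : R :=
  \sum_(i < k) u ord0 i * v ord0 i.

Definition grad (R : realType) (k : nat) (f : 'rV[R]_k -> R) (z : 'rV[R]_k) : 'rV[R]_k :=
  \row_(i < k) ('D_(delta_mx ord0 i) f z).

Definition is_norm (R : realType) (k : nat) (N : 'rV[R]_k -> R) : Prop :=
  [/\ forall x, N x = 0 -> x = 0,
      forall (a : R) x, N (a *: x) = `|a| * N x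
    & forall x y, N (x + y) <= N x + N y].

Definition dual_norm (R : realType) (k : nat) (N : 'rV[R]_k -> R) (xi : 'rV[R]_k) : R :=
  sup [set dotv xi z | z in [set z | N z <= 1]].

Definition strongly_convex1 (R : realType) (k : nat) (N : 'rV[R]_k -> R)
  (psi : 'rV[R]_k -> R) : Prop :=
  forall x y (t : R), 0 <= t <= 1 ->
    psi (t *: x + (1 - t) *: y) <=
      t * psi x + (1 - t) * psi y - t * (1 - t) / 2 * N (x - y) ^+ 2.

Definition bregman (R : realType) (k : nat) (psi : 'rV[R]_k -> R) (w z : 'rV[R]_k) : R :=
  psi w - psi z - dotv (grad psi z) (w - z).

Definition Omega (R : realType) (k : nat) (psi : 'rV[R]_k -> R) (Z : set 'rV[R]_k) : \bar R :=
  ereal_sup [set (bregman psi z z')%:E | z in Z & z' in Z].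

Definition is_prox (R : realType) (k : nat) (psi : 'rV[R]_k -> R) (Z : set 'rV[R]_k)
  (xi z p : 'rV[R]_k) : Prop :=
  Z p /\ forall w, Z w -> dotv xi p + bregman psi p z <= dotv xi w + bregman psi w z.

Definition Fop (R : realType) (n m : nat) (phi : 'rV[R]_(n + m) -> R)
  (z : 'rV[R]_(n + m)) : 'rV[R]_(n + m) :=
  let g := grad phi z in row_mx (lsubmx g) (- rsubmx g).

Definition prodset (R : realType) (n m : nat) (X : set 'rV[R]_n) (Y : set 'rV[R]_m)
  : set 'rV[R]_(n + m) := [set z | X (lsubmx z) /\ Y (rsubmx z)].

Definition mp_delta (R : realType) (k : nat) (psi : 'rV[R]_k -> R) (F : 'rV[R]_k -> 'rV[R]_k)
  (tau : nat -> R) (z zt : nat -> 'rV[R]_k) (t : nat) : R :=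
  tau t * dotv (F (zt t)) (zt t - z t.+1) - bregman psi (z t.+1) (z t).

Definition mp_S (R : realType) (w tau : nat -> R) (T : nat) : R :=
  \sum_(1 <= t < T.+1) w t * tau t.

Definition mp_zbar (R : realType) (k : nat) (w tau : nat -> R) (zt : nat -> 'rV[R]_k)
  (T : nat) : 'rV[R]_k :=
  (mp_S w tau T)^-1 *: \sum_(1 <= t < T.+1) (w t * tau t) *: zt t.

From HB Require Import structures.
From mathcomp Require Import all_boot all_order all_algebra.
From mathcomp Require Import all_classical all_reals all_analysis.
From mathcomp Require Import ring lra.
Import Order.TTheory GRing.Theory Num.Theory.
Import numFieldNormedType.Exports.
Set Implicit Arguments. Unset Strict Implicit. Unset Printing Implicit Defensive.
Local Open Scope classical_set_scope.
Local Open Scope ring_scope.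

(* Fix u = (x, y) in Z = X * Y and write D_t = D(u, z^t).  Convexity of phi in
   x and concavity in y bound the gap phi(x~_t, y) - phi(x, y~_t) by
   <F(z~_t), z~_t - u>, and the optimality condition of the second prox step,
   combined with the three-point identity of the Bregman divergence, gives
   tau_t <F(z~_t), z~_t - u> <= D_t - D_{t+1} + delta_t.  Summing with the
   weights w_t, Jensen's inequality turns the left-hand side into S_T times the
   gap at the averaged point, and Abel summation with nondecreasing weights
   bounds sum_t w_t (D_t - D_{t+1}) by w_T Omega.
   For tau_t = 1/L, testing the first prox step at z^{t+1}, the Lipschitz bound
   and 1-strong convexity give delta_t <= 0, while
   sum_{t <= T} t^q >= T^(q+1) / (q+1) gives w_T / S_T <= (q+1) L / T. *)

Section InnerProduct.
Variables (R : realType) (k : nat).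
Implicit Types u v w : 'rV[R]_k.

Lemma dotvDr u v w : dotv u (v + w) = dotv u v + dotv u w.
Proof. by rewrite /dotv -big_split; apply: eq_bigr => i _; rewrite mxE mulrDr. Qed.

Lemma dotvDl u v w : dotv (v + w) u = dotv v u + dotv w u.
Proof. by rewrite /dotv -big_split; apply: eq_bigr => i _; rewrite mxE mulrDl. Qed.

Lemma dotvZr a u v : dotv u (a *: v) = a * dotv u v.
Proof. by rewrite /dotv mulr_sumr; apply: eq_bigr => i _; rewrite mxE mulrCA. Qed.

Lemma dotvZl a u v : dotv (a *: u) v = a * dotv u v.
Proof. by rewrite /dotv mulr_sumr; apply: eq_bigr => i _; rewrite mxE mulrA. Qed.

Lemma dotvNr u v : dotv u (- v) = - dotv u v.
Proof. by rewrite -scaleN1r dotvZr mulN1r. Qed.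

Lemma dotvNl u v : dotv (- u) v = - dotv u v.
Proof. by rewrite -scaleN1r dotvZl mulN1r. Qed.

Lemma dotvBr u v w : dotv u (v - w) = dotv u v - dotv u w.
Proof. by rewrite dotvDr dotvNr. Qed.

Lemma dotvBl u v w : dotv (v - w) u = dotv v u - dotv w u.
Proof. by rewrite dotvDl dotvNl. Qed.

Lemma dotv0r u : dotv u 0 = 0.
Proof. by rewrite -(scale0r 0) dotvZr mul0r. Qed.

Lemma dotv_grad (f : 'rV[R]_k -> R) a v :
  differentiable f a -> dotv (grad f a) v = 'D_v f a.
Proof.
move=> df; rewrite deriveE // {2}(row_sum_delta v) linear_sum /dotv.
by apply: eq_bigr => i _; rewrite linearZ /= mxE -deriveE // mulrC (ord1 0).
Qed.

End InnerProduct.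

Lemma dotv_row_mx (R : realType) n m (a c : 'rV[R]_n) (b d : 'rV[R]_m) :
  dotv (row_mx a b) (row_mx c d) = dotv a c + dotv b d.
Proof.
rewrite /dotv big_split_ord /=; congr (_ + _); apply: eq_bigr => i _;
  by rewrite ?row_mxEl ?row_mxEr.
Qed.

Section DirectionalDerivativeBounds.
Variables (R : realType) (V : normedModType R) (f : V -> R) (a d : V).
Hypothesis df : derivable f a d.

Let dquot_cvg_right :
  (fun s : R => s^-1 *: (f (s *: d + a) - f a)) @ 0^'+ --> 'D_d f a.
Proof.
apply: cvg_trans df; apply: cvg_app.
by apply: within_subset => // s; exact: lt0r_neq0.
Qed.

Lemma derive_le_dquot K C :
  (forall s : R, 0 < s <= 1 -> s^-1 * (f (s *: d + a) - f a) <= K + s * C) ->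
  'D_d f a <= K.
Proof.
move=> le_dquot.
have cvgK : (fun s : R => K + s * C) @ 0^'+ --> K.
  rewrite -[X in _ --> X]addr0 -[X in _ + X](mul0r C).
  by apply: cvg_at_right_filter; apply: cvgD; [exact: cvg_cst | apply: cvgMr_tmp].
apply: (ler_cvg_to dquot_cvg_right cvgK); near=> s; apply: le_dquot.
by apply/andP; split; near: s; [exact: nbhs_right_gt | exact: nbhs_right_le].
Unshelve. all: by end_near. Qed.

Lemma derive_ge_dquot K :
  (forall s : R, 0 < s <= 1 -> K <= s^-1 * (f (s *: d + a) - f a)) ->
  K <= 'D_d f a.
Proof.
move=> ge_dquot; apply: (ler_cvg_to (cvg_cst K) dquot_cvg_right).
near=> s; apply: ge_dquot.
by apply/andP; split; near: s; [exact: nbhs_right_gt | exact: nbhs_right_le].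
Unshelve. all: by end_near. Qed.

End DirectionalDerivativeBounds.

Lemma normr_row_coord_le (R : realType) k (x : 'rV[R]_k) i : `|x 0 i| <= `|x|.
Proof.
by rewrite [leRHS]/Num.norm /= mx_normrE; apply/bigmax_geP; right; exists (0, i).
Qed.

Section AbstractNorm.
Variables (R : realType) (k : nat) (N : 'rV[R]_k -> R).
Hypothesis normN : is_norm N.

Lemma is_norm_eq0 x : N x = 0 -> x = 0.
Proof. by case: normN => + _ _; apply. Qed.

Lemma is_normZ a x : N (a *: x) = `|a| * N x.
Proof. by case: normN => _ + _; apply. Qed.

Lemma is_norm_triangle x y : N (x + y) <= N x + N y.
Proof. by case: normN => _ _; apply. Qed.

Lemma is_norm0 : N 0 = 0.
Proof. by rewrite -(scale0r 0) is_normZ normr0 mul0r. Qed.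

Lemma is_normN x : N (- x) = N x.
Proof. by rewrite -scaleN1r is_normZ normrN normr1 mul1r. Qed.

Lemma is_normBC x y : N (x - y) = N (y - x).
Proof. by rewrite -is_normN opprB. Qed.

Lemma is_norm_ge0 x : 0 <= N x.
Proof. by have := is_norm_triangle x (- x); rewrite subrr is_norm0 is_normN; lra. Qed.

Lemma is_norm_sum (I : Type) (r : seq I) (F : I -> 'rV[R]_k) :
  N (\sum_(i <- r) F i) <= \sum_(i <- r) N (F i).
Proof.
elim: r => [|i r IHr]; first by rewrite !big_nil is_norm0.
by rewrite !big_cons; apply: le_trans (is_norm_triangle _ _) (lerD _ IHr).
Qed.

Lemma is_norm_le_mx_norm : exists2 K, 0 < K & forall x, N x <= K * `|x|.
Proof.
exists (\sum_(i < k) N (delta_mx 0 i) + 1).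
  by rewrite ltr_wpDl // sumr_ge0 // => i _; exact: is_norm_ge0.
move=> x; rewrite {1}(row_sum_delta x).
apply: le_trans (is_norm_sum _ (fun j => x 0 j *: delta_mx 0 j)) _.
rewrite mulrDl mul1r -[leLHS]addr0 lerD // mulr_suml; apply: ler_sum => i _.
by rewrite is_normZ mulrC ler_wpM2l ?is_norm_ge0 ?normr_row_coord_le.
Qed.

Lemma is_norm_continuous : continuous N.
Proof.
have [K K0 NK] := is_norm_le_mx_norm.
move=> x; apply/(@cvgrPdist_le _ _ _ _ (nbhs_filter x)) => e e0.
have eK : 0 < K^-1 * e by rewrite mulr_gt0 ?invr_gt0.
near=> y.
have xy_small : K * `|x - y| <= e.
  by rewrite -ler_pdivlMl //; near: y; apply: cvgr_dist_le eK; exact: cvg_id.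
apply: le_trans xy_small; apply: le_trans (NK (x - y)).
have := is_norm_triangle (x - y) y; have := is_norm_triangle (y - x) x.
by rewrite !subrK is_normBC ler_norml; lra.
Unshelve. all: by end_near. Qed.

(* [1 / N] is continuous, hence bounded, on the compact unit sphere of the
   sup norm. *)
Lemma is_norm_ge_mx_norm : exists2 c, 0 < c & forall x, c * `|x| <= N x.
Proof.
pose S := [set x : 'rV[R]_k | `|x| = 1].
have N_neq0 x : S x -> N x != 0.
  move=> Sx; apply/eqP => /is_norm_eq0 x0.
  by move: Sx; rewrite /S /= x0 normr0 => /esym/eqP; rewrite oner_eq0.
have S_compact : compact S.
  apply: bounded_closed_compact.
    by exists 1; split => // M M1 x /= ->; exact: ltW.
  apply: (@preimage_closed _ _ (fun x : 'rV[R]_k => `|x|) [set 1]).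
    by move=> x _; exact: norm_continuous.
  exact: closed_eq.
have invN_cont : {within S, continuous (fun x => (N x)^-1)}.
  apply: continuous_in_subspaceT => x; rewrite inE => Sx.
  apply: (@cvgV _ _ _ (nbhs_filter x)); last exact: is_norm_continuous.
  exact: N_neq0.
have [M M0 boundM] := pinfty_ex_gt0 (compact_bounded
  (continuous_compact invN_cont S_compact)).
exists M^-1 => [|x]; first by rewrite invr_gt0.
have [->|x0] := eqVneq x 0; first by rewrite normr0 mulr0 is_norm0.
have nx0 : 0 < `|x| by rewrite normr_gt0.
have Sx' : S (`|x|^-1 *: x) by rewrite /S /= normrZ normfV normr_id mulVf ?gt_eqF.
have Nx'_gt0 : 0 < N (`|x|^-1 *: x) by rewrite lt0r N_neq0 ?is_norm_ge0.
have := boundM _ (ex_intro2 _ _ _ Sx' erefl).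
rewrite /= ger0_norm ?invr_ge0 ?is_norm_ge0 // invf_ple ?posrE //.
by rewrite is_normZ normfV normr_id ler_pdivlMl // mulrC.
Qed.

Lemma dotv_le_dual_norm a v : dotv a v <= dual_norm N a * N v.
Proof.
have [c c0 Nc] := is_norm_ge_mx_norm.
pose E := [set dotv a z | z in [set z | N z <= 1]].
have supE : has_sup E.
  split; first by exists (dotv a 0), 0 => //=; rewrite is_norm0.
  exists ((\sum_i `|a 0 i|) / c) => _ [z /= Nz1 <-].
  have zc : `|z| <= c^-1 by rewrite -(ler_pM2l c0) mulfV ?gt_eqF // (le_trans (Nc z)).
  rewrite /dotv mulr_suml; apply: le_trans (ler_norm _) _.
  apply: le_trans (ler_norm_sum _ _ _) _; apply: ler_sum => i _.
  by rewrite normrM ler_wpM2l // (le_trans (normr_row_coord_le _ _) zc).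
have [v0|Nv_neq0] := eqVneq (N v) 0.
  by rewrite (is_norm_eq0 v0) dotv0r is_norm0 mulr0.
have Nv_gt0 : 0 < N v by rewrite lt0r Nv_neq0 is_norm_ge0.
have unit_v : N ((N v)^-1 *: v) <= 1.
  by rewrite is_normZ ger0_norm ?invr_ge0 ?is_norm_ge0 // mulVf.
have := sup_upper_bound supE (ex_intro2 _ _ ((N v)^-1 *: v) unit_v erefl).
by rewrite /= dotvZr -ler_pdivlMl ?invr_gt0 // invrK mulrC.
Qed.

End AbstractNorm.

Section Convexity.
Variables (R : realType) (V : lmodType R).

Lemma segmentxx (t : R) (v : V) : t *: v + (1 - t) *: v = v.
Proof. by rewrite -scalerDl addrC subrK scale1r. Qed.

Lemma segment_shift (t : R) (a b : V) : t *: (b - a) + a = t *: b + (1 - t) *: a.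
Proof. by rewrite scalerBr scalerBl scale1r addrA addrAC. Qed.

Lemma convex_set_segment (A : set V) a b (t : R) :
  convex_set (A : set (convex_lmodType V)) -> A a -> A b -> 0 <= t <= 1 ->
  A (t *: a + (1 - t) *: b).
Proof.
move=> convA Aa Ab /andP[t0 t1].
by have := convA a b (Itv01 t0 t1); rewrite !inE; apply.
Qed.

Lemma jensen_convex_comb (A : set V) (f : V -> R) (I : eqType) (r : seq I)
    (c : I -> R) (a : I -> V) :
  convex_set (A : set (convex_lmodType V)) ->
  (forall u v t, A u -> A v -> 0 <= t <= 1 ->
     f (t *: u + (1 - t) *: v) <= t * f u + (1 - t) * f v) ->
  (forall i, 0 <= c i) -> (forall i, A (a i)) -> 0 < \sum_(i <- r) c i ->
  A ((\sum_(i <- r) c i)^-1 *: \sum_(i <- r) c i *: a i) /\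
  f ((\sum_(i <- r) c i)^-1 *: \sum_(i <- r) c i *: a i)
    <= (\sum_(i <- r) c i)^-1 * \sum_(i <- r) c i * f (a i).
Proof.
move=> convA convf c_ge0 Aa; elim: r => [|i r IHr]; first by rewrite big_nil ltxx.
rewrite !big_cons.
set S := \sum_(j <- r) c j; set Sa := \sum_(j <- r) c j *: a j.
set Sf := \sum_(j <- r) c j * f (a j).
have S_ge0 : 0 <= S by rewrite sumr_ge0.
have [S0 Si_gt0|S_neq0 Si_gt0] := eqVneq S 0.
  have cr0 j : j \in r -> c j = 0.
    by move: S0 => /eqP; rewrite psumr_eq0 // => /allP/(_ j) h /h /eqP.
  have -> : Sa = 0 by rewrite /Sa big1_seq // => j /andP[_ /cr0 ->]; rewrite scale0r.
  have -> : Sf = 0 by rewrite /Sf big1_seq // => j /andP[_ /cr0 ->]; rewrite mul0r.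
  move: Si_gt0; rewrite S0 !addr0 => ci_gt0.
  by rewrite scalerA mulVf ?gt_eqF // scale1r mulrA mulVf ?gt_eqF // mul1r.
have S_gt0 : 0 < S by rewrite lt0r S_neq0.
have [A_avg f_avg] := IHr S_gt0.
pose t := c i / (c i + S).
have t01 : 0 <= t <= 1.
  by rewrite /t divr_ge0 ?c_ge0 ?(ltW Si_gt0) //= ler_pdivrMr // mul1r lerDl.
have t' : 1 - t = S / (c i + S) by rewrite /t; field; rewrite gt_eqF.
have -> : (c i + S)^-1 *: (c i *: a i + Sa) = t *: a i + (1 - t) *: (S^-1 *: Sa).
  rewrite t' scalerDr !scalerA; congr (_ *: _ + _ *: _); first by rewrite mulrC.
  by field; rewrite S_neq0 gt_eqF.
split; first exact: convex_set_segment.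
apply: le_trans (convf _ _ _ (Aa i) A_avg t01) _.
apply: le_trans (lerD (lexx _) (ler_wpM2l _ f_avg)) _.
  by rewrite t' divr_ge0 ?ltW.
by rewrite t' /t -/S -/Sf le_eqVlt; apply/predU1l; field; rewrite S_neq0 gt_eqF.
Qed.

End Convexity.

Lemma convex_prodset (R : realType) n m (X : set 'rV[R]_n) (Y : set 'rV[R]_m) :
  convex_set X -> convex_set Y -> convex_set (prodset X Y).
Proof.
move=> convX convY a b l; rewrite !inE => -[Xa Ya] [Xb Yb].
have l01 : 0 <= l%:num <= 1 by rewrite ge0 le1.
by split; rewrite /= linearD !linearZ /=; exact: convex_set_segment.
Qed.

Section GradientInequalities.
Variables (R : realType) (k : nat) (f : 'rV[R]_k -> R) (a b : 'rV[R]_k).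
Hypothesis f_diff : differentiable f a.

Lemma grad_le_segment (c : R) :
  (forall t, 0 < t <= 1 ->
     f (t *: b + (1 - t) *: a) <= t * f b + (1 - t) * f a - t * (1 - t) * c) ->
  dotv (grad f a) (b - a) <= f b - f a - c.
Proof.
move=> f_seg; rewrite dotv_grad //.
apply: (derive_le_dquot (diff_derivable (v := b - a) f_diff) (C := c)) => s s01.
have /andP[s0 _] := s01.
rewrite segment_shift ler_pdivrMl //; have := f_seg s s01; nra.
Qed.

Lemma grad_ge_segment :
  (forall t, 0 < t <= 1 -> t * f b + (1 - t) * f a <= f (t *: b + (1 - t) *: a)) ->
  f b - f a <= dotv (grad f a) (b - a).
Proof.
move=> f_seg; rewrite dotv_grad //.
apply: (derive_ge_dquot (diff_derivable (v := b - a) f_diff)) => s s01.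
have /andP[s0 _] := s01.
rewrite segment_shift ler_pdivlMl //; have := f_seg s s01; nra.
Qed.

End GradientInequalities.

Section Bregman.
Variables (R : realType) (k : nat) (psi : 'rV[R]_k -> R).
Hypothesis psi_diff : forall z, differentiable psi z.

Lemma bregman_three_point w z p : bregman psi w z =
  bregman psi w p + bregman psi p z + dotv (grad psi p - grad psi z) (w - p).
Proof.
rewrite /bregman dotvBl.
have -> : w - z = (w - p) + (p - z) by rewrite addrA subrK.
by rewrite dotvDr; ring.
Qed.

Lemma bregman_ge_sqr (N : 'rV[R]_k -> R) u v : strongly_convex1 N psi ->
  N (u - v) ^+ 2 / 2 <= bregman psi u v.
Proof.
move=> psi_sc; have psi_seg t : 0 < t <= 1 -> psi (t *: u + (1 - t) *: v) <=
    t * psi u + (1 - t) * psi v - t * (1 - t) * (N (u - v) ^+ 2 / 2).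
  case/andP=> t0 t1.
  have -> : t * (1 - t) * (N (u - v) ^+ 2 / 2) = t * (1 - t) / 2 * N (u - v) ^+ 2.
    by ring.
  by apply: psi_sc; rewrite ltW.
by have := grad_le_segment (psi_diff v) psi_seg; rewrite /bregman; lra.
Qed.

Lemma bregman_ge0 (N : 'rV[R]_k -> R) u v : strongly_convex1 N psi ->
  0 <= bregman psi u v.
Proof.
move=> psi_sc; apply: le_trans (bregman_ge_sqr u v psi_sc).
by rewrite divr_ge0 ?sqr_ge0.
Qed.

Lemma prox_optimality (Z : set 'rV[R]_k) xi z p w :
  convex_set Z -> is_prox psi Z xi z p -> Z w ->
  0 <= dotv (xi + grad psi p - grad psi z) (w - p).
Proof.
(* [p] minimizes the prox objective on the segment [[p, w]], so its one-sided
   derivative at [p] towards [w] is nonnegative. *)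
move=> convZ [Zp p_min] Zw.
suff : dotv (grad psi z - xi) (w - p) <= dotv (grad psi p) (w - p).
  by rewrite !dotvBl dotvDl; lra.
rewrite dotv_grad //.
apply: (derive_ge_dquot (diff_derivable (v := w - p) (psi_diff p))) => s.
case/andP=> s0 s1; have s01 : 0 <= s <= 1 by rewrite (ltW s0).
have := p_min _ (convex_set_segment convZ Zw Zp s01).
rewrite -segment_shift /bregman.
have -> : s *: (w - p) + p - z = s *: (w - p) + (p - z) by rewrite addrA.
by rewrite !(dotvDr, dotvNr, dotvZr, dotvBl) ler_pdivlMl //; lra.
Qed.

Lemma prox_three_point (Z : set 'rV[R]_k) xi z p w :
  convex_set Z -> is_prox psi Z xi z p -> Z w ->
  dotv xi (p - w) <= bregman psi w z - bregman psi w p - bregman psi p z.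
Proof.
move=> convZ prox_p Zw; have := prox_optimality convZ prox_p Zw.
by rewrite (bregman_three_point w z p) -[p - w]opprB dotvNr !(dotvDl, dotvNl); lra.
Qed.

End Bregman.

Lemma bregman_le_Omega (R : realType) k (psi : 'rV[R]_k -> R) (Z : set 'rV[R]_k) u v :
  Z u -> Z v -> ((bregman psi u v)%:E <= Omega psi Z)%E.
Proof. by move=> Zu Zv; apply: ereal_sup_ubound; exists u => //; exists v. Qed.

Lemma sum_weighted_telescope_le (R : realType) (w D : nat -> R) (B : R) T :
  (forall s t, (s <= t)%N -> w s <= w t) -> 0 <= w 1%N ->
  (forall t, (1 <= t <= T)%N -> D t <= B) -> (1 <= T)%N ->
  \sum_(1 <= t < T.+1) w t * (D t - D t.+1) <= w T * (B - D T.+1).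
Proof.
move=> w_homo w1_ge0; elim: T => [//|T IHT] DB _.
rewrite big_nat_recr //=; case: T IHT DB => [|T] IHT DB.
  by rewrite big_geq // add0r ler_wpM2l // lerB // DB.
have DB' t : (1 <= t <= T.+1)%N -> D t <= B.
  by case/andP=> t1 tT; apply: DB; rewrite t1 ltnW.
have IH := IHT DB' isT.
have w_step := w_homo _ _ (leqnSn T.+1).
have DB_last := DB T.+2 (leqnn _).
have w_ge0 := le_trans w1_ge0 (w_homo 1%N T.+1 isT).
nra.
Qed.

Lemma weight_last_gt0 (R : realType) (w tau : nat -> R) T :
  (forall t, 0 <= w t) -> (forall s t, (s <= t)%N -> w s <= w t) ->
  0 < mp_S w tau T -> 0 < w T.
Proof.
move=> w_ge0 w_homo; apply: contraTT; rewrite -leNgt => wT_le0.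
rewrite /mp_S big_nat big1 ?ltxx // => t /andP[_ tT].
have -> : w t = 0 by apply/eqP; rewrite eq_le w_ge0 (le_trans (w_homo _ _ _) wT_le0).
by rewrite mul0r.
Qed.

Definition saddle_gap (R : realType) n m (phi : 'rV[R]_(n + m) -> R)
    (x : 'rV[R]_n) (y : 'rV[R]_m) (z : 'rV[R]_(n + m)) : R :=
  phi (row_mx (lsubmx z) y) - phi (row_mx x (rsubmx z)).

Section SaddlePoint.
Variables (R : realType) (n m : nat) (X : set 'rV[R]_n) (Y : set 'rV[R]_m).
Variable phi : 'rV[R]_(n + m) -> R.
Hypotheses (convX : convex_set X) (convY : convex_set Y).
Hypothesis phi_cvx : forall x1 x2 y (t : R), X x1 -> X x2 -> Y y -> 0 <= t <= 1 ->
  phi (row_mx (t *: x1 + (1 - t) *: x2) y)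
    <= t * phi (row_mx x1 y) + (1 - t) * phi (row_mx x2 y).
Hypothesis phi_ccv : forall x y1 y2 (t : R), X x -> Y y1 -> Y y2 -> 0 <= t <= 1 ->
  t * phi (row_mx x y1) + (1 - t) * phi (row_mx x y2)
    <= phi (row_mx x (t *: y1 + (1 - t) *: y2)).

Local Notation Z := (prodset X Y).

Lemma saddle_gap_le_dotv_Fop x y z : X x -> Y y -> Z z ->
  differentiable phi z -> saddle_gap phi x y z <= dotv (Fop phi z) (z - row_mx x y).
Proof.
move=> Xx Yy; rewrite -[z]hsubmxK; move: (lsubmx z) (rsubmx z) => a b.
rewrite /prodset /saddle_gap /Fop /= !row_mxKl !row_mxKr => -[Xa Yb] phi_diff.
have cvx : dotv (grad phi (row_mx a b)) (row_mx x b - row_mx a b)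
    <= phi (row_mx x b) - phi (row_mx a b).
  rewrite -[leRHS]subr0; apply: (grad_le_segment (b := row_mx x b) phi_diff) => t /andP[t0 t1].
  rewrite !scale_row_mx add_row_mx segmentxx mulr0 subr0.
  by apply: phi_cvx => //; rewrite (ltW t0).
have ccv : phi (row_mx a y) - phi (row_mx a b)
    <= dotv (grad phi (row_mx a b)) (row_mx a y - row_mx a b).
  apply: (grad_ge_segment (b := row_mx a y) phi_diff) => t /andP[t0 t1].
  rewrite !scale_row_mx add_row_mx segmentxx.
  by apply: phi_ccv => //; rewrite (ltW t0).
rewrite -[grad _ _]hsubmxK !opp_row_mx !add_row_mx !dotv_row_mx subrr dotv0r in cvx ccv.
rewrite opp_row_mx add_row_mx dotv_row_mx !(dotvBr, dotvNl) in cvx ccv *; lra.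
Qed.

Lemma saddle_gap_convex_comb x y (I : eqType) (r : seq I) (c : I -> R)
    (zs : I -> 'rV[R]_(n + m)) :
  X x -> Y y -> (forall i, 0 <= c i) -> (forall i, Z (zs i)) ->
  0 < \sum_(i <- r) c i ->
  saddle_gap phi x y ((\sum_(i <- r) c i)^-1 *: \sum_(i <- r) c i *: zs i)
    <= (\sum_(i <- r) c i)^-1 * \sum_(i <- r) c i * saddle_gap phi x y (zs i).
Proof.
move=> Xx Yy c_ge0 Zzs S_gt0.
have sub_avg k (f : {linear 'rV[R]_(n + m) -> 'rV[R]_k}) :
    f ((\sum_(i <- r) c i)^-1 *: \sum_(i <- r) c i *: zs i)
    = (\sum_(i <- r) c i)^-1 *: \sum_(i <- r) c i *: f (zs i).
  by rewrite linearZ linear_sum; congr (_ *: _); apply: eq_bigr => i _; rewrite linearZ.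
have [_ jensen_x] := jensen_convex_comb (f := fun x' => phi (row_mx x' y)) convX
  (fun u v t Xu Xv t01 => phi_cvx Xu Xv Yy t01) c_ge0 (fun i => (Zzs i).1) S_gt0.
have ccv_y u v t : Y u -> Y v -> 0 <= t <= 1 -> - phi (row_mx x (t *: u + (1 - t) *: v))
    <= t * - phi (row_mx x u) + (1 - t) * - phi (row_mx x v).
  by move=> Yu Yv t01; have := phi_ccv Xx Yu Yv t01; lra.
have [_ jensen_y] := jensen_convex_comb (f := fun y' => - phi (row_mx x y')) convY
  ccv_y c_ge0 (fun i => (Zzs i).2) S_gt0.
rewrite /saddle_gap (sub_avg _ lsubmx) (sub_avg _ rsubmx).
rewrite /= in jensen_x jensen_y.
under [X in _ <= _ * X]eq_bigr do rewrite mulrBr -mulrN.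
by rewrite big_split /= mulrDr; lra.
Qed.

Section MirrorProx.
Variables (N : 'rV[R]_(n + m) -> R) (psi : 'rV[R]_(n + m) -> R).
Hypothesis phi_diff : forall z, Z z -> differentiable phi z.
Hypothesis psi_diff : forall z, differentiable psi z.
Hypothesis psi_sc : strongly_convex1 N psi.

Local Notation F := (Fop phi).

Variables (tau : nat -> R) (z zt : nat -> 'rV[R]_(n + m)).
Hypothesis z0_in : Z (z 0%N).
Hypothesis prox_zt : forall t, is_prox psi Z (tau t *: F (z t)) (z t) (zt t).
Hypothesis prox_z : forall t, is_prox psi Z (tau t *: F (zt t)) (z t) (z t.+1).

Local Notation delta := (mp_delta psi F tau z zt).

Let convZ : convex_set Z := convex_prodset convX convY.

Lemma mp_z_in t : Z (z t).
Proof. by case: t => [//|t]; case: (prox_z t). Qed.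

Lemma mp_zt_in t : Z (zt t).
Proof. by case: (prox_zt t). Qed.

Lemma mp_step_le u t : Z u ->
  tau t * dotv (F (zt t)) (zt t - u)
    <= bregman psi u (z t) - bregman psi u (z t.+1) + delta t.
Proof.
move=> Zu; have := prox_three_point psi_diff convZ (prox_z t) Zu.
have -> : zt t - u = (zt t - z t.+1) + (z t.+1 - u) by rewrite addrA subrK.
by rewrite /mp_delta dotvZl (dotvDr _ (zt t - z t.+1)); lra.
Qed.

(* The first prox step tested at [z t.+1], the [L]-Lipschitz bound on [F] and
   the strong convexity of [psi] give [delta t <= tau L a b - a^2/2 - b^2/2]
   with [a = N (zt t - z t)], [b = N (zt t - z t.+1)]. *)
Lemma mp_delta_le0 (L : R) t : is_norm N ->
  (forall u v, Z u -> Z v -> dual_norm N (F u - F v) <= L * N (u - v)) ->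
  0 <= tau t -> tau t * L <= 1 -> delta t <= 0.
Proof.
move=> normN F_lip tau_ge0 tauL_le1.
set a := N (zt t - z t); set b := N (zt t - z t.+1).
have a_ge0 : 0 <= a by exact: is_norm_ge0.
have b_ge0 : 0 <= b by exact: is_norm_ge0.
have prox := prox_three_point psi_diff convZ (prox_zt t) (mp_z_in t.+1).
have lip : dotv (F (zt t) - F (z t)) (zt t - z t.+1) <= L * a * b.
  apply: le_trans (dotv_le_dual_norm normN _ _) _.
  by rewrite ler_wpM2r //; exact: F_lip (mp_zt_in t) (mp_z_in t).
have Da := bregman_ge_sqr psi_diff (zt t) (z t) psi_sc.
have Db := bregman_ge_sqr psi_diff (z t.+1) (zt t) psi_sc.
rewrite -/a in Da; rewrite (is_normBC normN) -/b in Db.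
have tau_lip := ler_wpM2l tau_ge0 lip.
have tauL_ab : tau t * L * (a * b) <= a * b.
  by rewrite -[leRHS]mul1r ler_wpM2r ?mulr_ge0.
rewrite dotvBl in tau_lip; rewrite dotvZl in prox; rewrite /mp_delta.
have := sqr_ge0 (a - b); nra.
Qed.

Section Weights.
Variable w : nat -> R.
Hypotheses (tau_gt0 : forall t, 0 < tau t) (w_ge0 : forall t, 0 <= w t).
Hypothesis w_homo : forall s t, (s <= t)%N -> w s <= w t.
Variables (T : nat) (x : 'rV[R]_n) (y : 'rV[R]_m).
Hypotheses (T_ge1 : (1 <= T)%N) (S_gt0 : 0 < mp_S w tau T) (Xx : X x) (Yy : Y y).

Let Zxy : Z (row_mx x y).
Proof. by rewrite /prodset /= row_mxKl row_mxKr. Qed.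

Lemma mp_weighted_gap_le (B : R) :
  (forall t, bregman psi (row_mx x y) (z t) <= B) ->
  saddle_gap phi x y (mp_zbar w tau zt T)
    <= (w T * B + \sum_(1 <= t < T.+1) w t * delta t) / mp_S w tau T.
Proof.
move=> DB; set u := row_mx x y; pose D t := bregman psi u (z t).
have c_ge0 t : 0 <= w t * tau t by exact: mulr_ge0 (w_ge0 t) (ltW (tau_gt0 t)).
have gap_avg := saddle_gap_convex_comb Xx Yy
  (r := index_iota 1 T.+1) c_ge0 mp_zt_in S_gt0.
have step t : w t * tau t * saddle_gap phi x y (zt t)
    <= w t * (D t - D t.+1) + w t * delta t.
  rewrite -mulrDr -mulrA ler_wpM2l //.
  apply: le_trans _ (mp_step_le t Zxy); rewrite ler_wpM2l ?(ltW (tau_gt0 t)) //.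
  exact: saddle_gap_le_dotv_Fop (mp_zt_in t) (phi_diff (mp_zt_in t)).
have telescope := sum_weighted_telescope_le (D := D) w_homo (w_ge0 1%N)
  (fun t _ => DB t) T_ge1.
have sum_steps : \sum_(1 <= t < T.+1) w t * tau t * saddle_gap phi x y (zt t)
    <= \sum_(1 <= t < T.+1) w t * (D t - D t.+1)
       + \sum_(1 <= t < T.+1) w t * delta t.
  by rewrite -big_split; apply: ler_sum => t _; exact: step.
have DT_ge0 := ler_wpM2l (w_ge0 T) (bregman_ge0 psi_diff u (z T.+1) psi_sc).
apply: le_trans gap_avg _; rewrite mulrC /mp_S ler_wpM2r ?invr_ge0 ?(ltW S_gt0) //.
rewrite /D in telescope sum_steps; lra.
Qed.

Lemma mp_weighted_gap_le_Omega :
  ((saddle_gap phi x y (mp_zbar w tau zt T))%:E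
    <= ((w T)%:E * Omega psi Z + (\sum_(1 <= t < T.+1) w t * delta t)%:E)
       * ((mp_S w tau T)^-1)%:E)%E.
Proof.
have D_le t := bregman_le_Omega psi Zxy (mp_z_in t).
case: (Omega psi Z) D_le => [r| |] D_le; last by have := D_le 0%N.
  rewrite -(EFinM (w T) r) -EFinD -EFinM lee_fin.
  by apply: mp_weighted_gap_le => t; rewrite -lee_fin.
have wT_gt0 := weight_last_gt0 w_ge0 w_homo S_gt0.
by rewrite gt0_muley ?lte_fin // addye // gt0_mulye ?leey // lte_fin invr_gt0.
Qed.

Lemma mp_gap_le_scaled_Omega (c : R) : 0 < c -> (forall t, delta t <= 0) ->
  w T / mp_S w tau T <= c ->
  ((saddle_gap phi x y (mp_zbar w tau zt T))%:E <= c%:E * Omega psi Z)%E.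
Proof.
move=> c_gt0 delta_le0 ratio_le.
have D_le t := bregman_le_Omega psi Zxy (mp_z_in t).
case: (Omega psi Z) D_le => [r| |] D_le; last by have := D_le 0%N.
  have r_ge0 : 0 <= r.
    rewrite -lee_fin; apply: le_trans (D_le 0%N).
    by rewrite lee_fin (bregman_ge0 psi_diff _ _ psi_sc).
  rewrite lee_fin; apply: le_trans (mp_weighted_gap_le (B := r) _) _.
    by move=> t; rewrite -lee_fin.
  have Q_le0 : \sum_(1 <= t < T.+1) w t * delta t <= 0.
    by apply: sumr_le0 => t _; rewrite mulr_ge0_le0.
  have Sinv_ge0 : 0 <= (mp_S w tau T)^-1 by rewrite invr_ge0 ltW.
  have QS_le0 := mulr_le0_ge0 Q_le0 Sinv_ge0.
  have := ler_wpM2r r_ge0 ratio_le; rewrite mulrDl mulrAC; lra.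
by rewrite gt0_muley ?leey // lte_fin.
Qed.

End Weights.

End MirrorProx.

End SaddlePoint.

(* Young's inequality with the conjugate exponents [q + 1] and [(q + 1) / q],
   applied to [a * (a + 1) `^ q]. *)
Lemma powR_succ_increment_le (R : realType) (q a : R) : 0 <= q -> 0 <= a ->
  (a + 1) `^ q * (a + 1) - a `^ q * a <= (q + 1) * (a + 1) `^ q.
Proof.
move=> q_ge0 a_ge0; have [->|q_neq0] := eqVneq q 0.
  by rewrite !powRr0 !mul1r; lra.
have q_gt0 : 0 < q by rewrite lt0r q_neq0.
have q1_gt0 : 0 < q + 1 by rewrite ltr_wpDl.
have a1_gt0 : 0 < a + 1 by rewrite ltr_wpDl.
have conj_exp : (q + 1)^-1 + ((q + 1) / q)^-1 = 1.
  by field; rewrite ?gt_eqF // q_neq0.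
have young := conjugate_powR a_ge0 (powR_ge0 (a + 1) q) q1_gt0
  (divr_gt0 q1_gt0 q_gt0) conj_exp.
have powA : a `^ (q + 1) = a `^ q * a by rewrite powRD ?(gt_eqF q1_gt0) ?powRr1.
have powB : ((a + 1) `^ q) `^ ((q + 1) / q) = (a + 1) `^ q * (a + 1).
  rewrite -powRrM (_ : q * ((q + 1) / q) = q + 1); last by field.
  by rewrite powRD ?(gt_eqF q1_gt0) // powRr1 // ltW.
rewrite powA powB in young.
move: young; set A := a `^ q * a; set B := (a + 1) `^ q => young.
have B_ge0 : 0 <= B by exact: powR_ge0.
have := ler_wpM2l (ltW q1_gt0) young.
rewrite (_ : (q + 1) * (A / (q + 1) + B * (a + 1) / ((q + 1) / q))
  = A + B * (a + 1) * q); last by field; rewrite ?gt_eqF // q_neq0.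
nra.
Qed.

Lemma sum_powR_ge (R : realType) (q : R) T : 0 <= q ->
  (T%:R : R) `^ q * T%:R <= (q + 1) * \sum_(1 <= t < T.+1) (t%:R : R) `^ q.
Proof.
move=> q_ge0; elim: T => [|T IHT]; first by rewrite mulr0 big_geq // mulr0.
rewrite big_nat_recr //= mulrDr -natr1.
by have := powR_succ_increment_le q_ge0 (ler0n R T); lra.
Qed.

Lemma sum_powR_gt0 (R : realType) (q : R) T : (1 <= T)%N ->
  0 < \sum_(1 <= t < T.+1) (t%:R : R) `^ q.
Proof.
by move=> T_ge1; rewrite big_ltn // powR1 ltr_pwDl // sumr_ge0.
Qed.

Lemma mp_S_const (R : realType) (w : nat -> R) (c : R) T :
  mp_S w (fun=> c) T = c * \sum_(1 <= t < T.+1) w t.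
Proof. by rewrite /mp_S mulr_sumr; apply: eq_bigr => t _; rewrite mulrC. Qed.

Lemma powR_weight_ratio_le (R : realType) (q L : R) T :
  0 <= q -> 0 < L -> (1 <= T)%N ->
  (T%:R : R) `^ q / mp_S (fun t => (t%:R : R) `^ q) (fun=> L^-1) T
    <= (q + 1) * L / T%:R.
Proof.
move=> q_ge0 L_gt0 T_ge1; rewrite mp_S_const.
have P_gt0 := sum_powR_gt0 q T_ge1.
move: P_gt0; set P := \sum_(1 <= t < T.+1) _ => P_gt0.
have T_gt0 : 0 < T%:R :> R by rewrite ltr0n.
rewrite (_ : _ / _ = (T%:R `^ q * T%:R) * (L / (P * T%:R))); last first.
  by field; rewrite !gt_eqF.
rewrite (_ : (q + 1) * L / T%:R = ((q + 1) * P) * (L / (P * T%:R))); last first.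
  by field; rewrite !gt_eqF.
rewrite ler_wpM2r ?divr_ge0 ?mulr_ge0 ?(ltW L_gt0) ?(ltW P_gt0) ?(ltW T_gt0) //.
exact: sum_powR_ge.
Qed.

Theorem theorem5 (R : realType) (n m : nat)
  (N : 'rV[R]_(n + m) -> R) (X : set 'rV[R]_n) (Y : set 'rV[R]_m)
  (phi : 'rV[R]_(n + m) -> R) (psi : 'rV[R]_(n + m) -> R) (L : R) :
  is_norm N ->
  closed X -> convex_set X -> closed Y -> convex_set Y ->
  (* phi convex in x *)
  (forall (x1 x2 : 'rV[R]_n) (y : 'rV[R]_m) (t : R), X x1 -> X x2 -> Y y -> 0 <= t <= 1 ->
     phi (row_mx (t *: x1 + (1 - t) *: x2) y)
       <= t * phi (row_mx x1 y) + (1 - t) * phi (row_mx x2 y)) ->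
  (* phi concave in y *)
  (forall (x : 'rV[R]_n) (y1 y2 : 'rV[R]_m) (t : R), X x -> Y y1 -> Y y2 -> 0 <= t <= 1 ->
     t * phi (row_mx x y1) + (1 - t) * phi (row_mx x y2)
       <= phi (row_mx x (t *: y1 + (1 - t) *: y2))) ->
  (* phi differentiable on Z *)
  (forall z, prodset X Y z -> differentiable phi z) ->
  (* sup_{z in Z} ||F z||_* < oo *)
  (exists M : R, forall z, prodset X Y z -> dual_norm N (Fop phi z) <= M) ->
  (* F is L-Lipschitz *)
  (forall z z', prodset X Y z -> prodset X Y z' ->
     dual_norm N (Fop phi z - Fop phi z') <= L * N (z - z')) ->
  (* psi smooth and 1-strongly convex w.r.t. N *)
  (forall z, differentiable psi z) ->
  strongly_convex1 N psi ->
  (* general bound *)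
  (forall (tau w : nat -> R) (z zt : nat -> 'rV[R]_(n + m)),
     prodset X Y (z 0%N) ->
     (forall t, 0 < tau t) ->
     (forall t, is_prox psi (prodset X Y) (tau t *: Fop phi (z t)) (z t) (zt t)) ->
     (forall t, is_prox psi (prodset X Y) (tau t *: Fop phi (zt t)) (z t) (z t.+1)) ->
     (forall t, 0 <= w t) ->
     (forall s t, (s <= t)%N -> w s <= w t) ->
     forall T : nat, (1 <= T)%N -> 0 < mp_S w tau T ->
     forall (x : 'rV[R]_n) (y : 'rV[R]_m), X x -> Y y ->
       ((phi (row_mx (lsubmx (mp_zbar w tau zt T)) y)
         - phi (row_mx x (rsubmx (mp_zbar w tau zt T))))%:E
        <= ((w T)%:E * Omega psi (prodset X Y)
            + (\sum_(1 <= t < T.+1) w t * mp_delta psi (Fop phi) tau z zt t)%:E)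
           * ((mp_S w tau T)^-1)%:E)%E)
  /\
  (* special case tau_t = 1/L, w_t = t^q *)
  (forall (q : R) (z zt : nat -> 'rV[R]_(n + m)),
     0 <= q -> 0 < L ->
     prodset X Y (z 0%N) ->
     (forall t, is_prox psi (prodset X Y) (L^-1 *: Fop phi (z t)) (z t) (zt t)) ->
     (forall t, is_prox psi (prodset X Y) (L^-1 *: Fop phi (zt t)) (z t) (z t.+1)) ->
     (forall t, mp_delta psi (Fop phi) (fun _ => L^-1) z zt t <= 0) /\
     (forall T : nat, (1 <= T)%N ->
      forall (x : 'rV[R]_n) (y : 'rV[R]_m), X x -> Y y ->
        let zb := mp_zbar (fun t => (t%:R : R) `^ q) (fun _ => L^-1) zt T in
        ((phi (row_mx (lsubmx zb) y) - phi (row_mx x (rsubmx zb)))%:E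
         <= ((q + 1) * L / T%:R)%:E * Omega psi (prodset X Y))%E)).
Proof.
move=> normN _ convX _ convY phi_cvx phi_ccv phi_diff _ F_lip psi_diff psi_sc.
split=> [tau w z zt z0 tau_gt0 prox_zt prox_z w_ge0 w_homo T T_ge1 S_gt0 x y Xx Yy
        |q z zt q_ge0 L_gt0 z0 prox_zt prox_z].
  exact: (mp_weighted_gap_le_Omega convX convY phi_cvx phi_ccv phi_diff psi_diff
    psi_sc z0 prox_zt prox_z tau_gt0 w_ge0 w_homo T_ge1 S_gt0 Xx Yy).
have delta_le0 t : mp_delta psi (Fop phi) (fun=> L^-1) z zt t <= 0.
  apply: (mp_delta_le0 convX convY psi_diff psi_sc z0 prox_zt prox_z normN F_lip).
    by rewrite invr_ge0 ltW.
  by rewrite mulVf ?gt_eqF.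
split=> // T T_ge1 x y Xx Yy /=.
have w_homo s t : (s <= t)%N -> (s%:R : R) `^ q <= t%:R `^ q.
  by move=> st; rewrite ge0_ler_powR ?nnegrE ?ler_nat.
have ratio_le := powR_weight_ratio_le q_ge0 L_gt0 T_ge1.
have S_gt0 : 0 < mp_S (fun t => (t%:R : R) `^ q) (fun=> L^-1) T.
  by rewrite mp_S_const mulr_gt0 ?invr_gt0 ?sum_powR_gt0.
apply: (mp_gap_le_scaled_Omega convX convY phi_cvx phi_ccv phi_diff psi_diff
  psi_sc z0 prox_zt prox_z _ _ w_homo T_ge1 S_gt0 Xx Yy _ delta_le0 ratio_le).
- by move=> t; rewrite invr_gt0.
- by move=> t; exact: powR_ge0.
- by rewrite divr_gt0 ?mulr_gt0 ?ltr0n ?ltr_wpDl.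
Qed.
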